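(* For every integer $k\ge2$, \[\mathsf P(k)=\mathsf I(k)\oplus\underline x\,\mathsf P(k-2)\,\underline x,\] where $\underline x\,\mathsf P(k-2)\,\underline x=\{\underline xP(\underline x)\underline x: P\in\mathsf P(k-2)\}$. Moreover, $\mathsf I(k)$ and $\underline x\,\mathsf P(k-2)\,\underline x$ are orthogonal with respect to $\langle\cdot,\cdot\rangle_k$; in fact $\mathsf I(k)$ is exactly the orthogonal complement of $\underline x\,\mathsf P(k-2)\,\underline x$ in $\mathsf P(k)$.
   Context: $\mathbb R_{0,m}$ is the $2^m$-dimensional real Clifford algebra generated by the orthonormal basis $e_1,\dots,e_m$ of $\mathbb R^m$ with relations $e_je_k+e_ke_j=-2\delta_{jk}$, with basis $e_A$ ($A\subseteq\{1,\dots,m\}$, $e_\emptyset=1$). For $a=\sum_Aa_Ae_A$, $[a]_0=a_\emptyset$ and the conjugation is $\overline a=\sum_Aa_A\overline{e_A}$, $\overline{e_A}=(-1)^{|A|(|A|+1)/2}e_A$. A point of $\mathbb R^m$ is identified with $\underline x=\sum_jx_je_j$. The Dirac operator $\partial_{\underline x}=\sum_je_j\partial_{x_j}$, and $\partial_{\underline x}f\partial_{\underline x}=\sum_{i,j}e_i(\partial_{x_i}\partial_{x_j}f)e_j$. $\mathsf P(k)$ is the real vector space of $\mathbb R_{0,m}$-valued homogeneous polynomials of degree $k$ on $\mathbb R^m$, and $\mathsf I(k)=\{P\in\mathsf P(k):\partial_{\underline x}P\partial_{\underline x}=0\}$ is the subspace of inframonogenic homogeneous polynomials of degree $k$. For $P_k=\sum_Ae_Ap_A(\underline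 x)$ with real homogeneous polynomials $p_A$, let $\overline{P_k(\partial_{\underline x})}=\sum_A\overline{e_A}\,p_A(\partial_{x_1},\dots,\partial_{x_m})$, and define the inner product $\langle P_k,Q_k\rangle_k=\big[\overline{P_k(\partial_{\underline x})}\,Q_k(\underline x)\big]_0$ on $\mathsf P(k)$. *)

From HB Require Import structures.
From mathcomp Require Import all_boot all_order all_algebra.
Set Implicit Arguments. Unset Strict Implicit. Unset Printing Implicit Defensive.
Import Order.TTheory GRing.Theory Num.Theory.
Local Open Scope ring_scope.

Definition Cl (R : realFieldType) (m : nat) := {ffun {set 'I_m} -> R}.

(* sign in e_A e_B = sgnCl A B e_{A Delta B} for e_j e_k + e_k e_j = -2 delta_jk,
   e_A = e_{a1}...e_{ar} with a1 < ... < ar *)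
Definition sgnCl (R : realFieldType) (m : nat) (A B : {set 'I_m}) : R :=
  (-1) ^+ (#|[set p : 'I_m * 'I_m | (p.1 \in A) && ((p.2 \in B) && (p.2 < p.1)%N)]|
           + #|A :&: B|)%N.

Definition symdiff (m : nat) (A B : {set 'I_m}) : {set 'I_m} := (A :\: B) :|: (B :\: A).

Definition clmul (R : realFieldType) (m : nat) (a b : Cl R m) : Cl R m :=
  [ffun C => \sum_(A : {set 'I_m}) \sum_(B : {set 'I_m} | symdiff A B == C)
               sgnCl R A B * a A * b B].

Definition eA (R : realFieldType) (m : nat) (A : {set 'I_m}) : Cl R m :=
  [ffun B => (B == A)%:R].

Definition egen (R : realFieldType) (m : nat) (j : 'I_m) : Cl R m := eA R [set j].

Definition clscale (R : realFieldType) (m : nat) (r : R) (a : Cl R m) : Cl R m :=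
  [ffun A => r * a A].

Definition scal0 (R : realFieldType) (m : nat) (a : Cl R m) : R := a set0.

Definition clconj (R : realFieldType) (m : nat) (a : Cl R m) : Cl R m :=
  [ffun A : {set 'I_m} => (-1) ^+ ((#|A| * #|A|.+1) %/ 2)%N * a A].

Definition cmono (m : nat) := {ffun 'I_m -> nat}.
Definition mdeg (m : nat) (a : cmono m) : nat := (\sum_(i < m) a i)%N.
Definition mono0 (m : nat) : cmono m := [ffun _ => 0%N].

(* a polynomial = its coefficient function (alpha |-> coefficient of x^alpha) *)
Definition cpoly (R : realFieldType) (m : nat) := cmono m -> Cl R m.

Definition pzero (R : realFieldType) (m : nat) : cpoly R m := fun _ => 0.
Arguments pzero R m : clear implicits.
Definition padd (R : realFieldType) (m : nat) (P Q : cpoly R m) : cpoly R m :=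
  fun a => P a + Q a.

(* P is in P(k): homogeneous of degree k (finitely many monomials, automatically) *)
Definition isHom (R : realFieldType) (m : nat) (k : nat) (P : cpoly R m) : Prop :=
  forall a : cmono m, mdeg a <> k -> P a = 0.

Definition mulx (R : realFieldType) (m : nat) (j : 'I_m) (P : cpoly R m) : cpoly R m :=
  fun a => if (0 < a j)%N then P [ffun i => (a i - (i == j))%N] else 0.

Definition dx (R : realFieldType) (m : nat) (j : 'I_m) (P : cpoly R m) : cpoly R m :=
  fun a => clscale (a j).+1%:R (P [ffun i => (a i + (i == j))%N]).

(* x P x = sum_{i,j} e_i (x_i x_j P) e_j *)
Definition xPx (R : realFieldType) (m : nat) (P : cpoly R m) : cpoly R m :=
  fun a => \sum_(i < m) \sum_(j < m)
             clmul (clmul (egen R i) (mulx i (mulx j P) a)) (egen R j).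

(* d P d = sum_{i,j} e_i (d_i d_j P) e_j *)
Definition dPd (R : realFieldType) (m : nat) (P : cpoly R m) : cpoly R m :=
  fun a => \sum_(i < m) \sum_(j < m)
             clmul (clmul (egen R i) (dx i (dx j P) a)) (egen R j).

Definition infra (R : realFieldType) (m : nat) (k : nat) (P : cpoly R m) : Prop :=
  isHom k P /\ dPd P = pzero R m.

Definition dmono (R : realFieldType) (m : nat) (b : cmono m) (Q : cpoly R m) : cpoly R m :=
  foldr (fun j acc => iter (b j) (dx j) acc) Q (enum 'I_m).

Definition mono_of (m k : nat) (f : {ffun 'I_m -> 'I_k.+1}) : cmono m :=
  [ffun i => nat_of_ord (f i)].

(* <P,Q>_k = [ conj(P(d)) Q(x) ]_0 where P = sum_A e_A p_A,
   conj(P(d)) = sum_A conj(e_A) p_A(d), p_A(d) = sum_{|beta| = k} p_A(beta) d^beta;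
   since conj(P(d)) Q has degree 0, its value is its constant coefficient. *)
Definition ipk (R : realFieldType) (m : nat) (k : nat) (P Q : cpoly R m) : R :=
  scal0 (\sum_(f : {ffun 'I_m -> 'I_k.+1} | mdeg (mono_of f) == k)
           \sum_(A : {set 'I_m})
              clmul (clconj (eA R A))
                    (clscale (P (mono_of f) A) (dmono (mono_of f) Q (@mono0 m)))).

From HB Require Import structures.
From mathcomp Require Import all_boot all_order all_algebra.
From Stdlib Require Import FunctionalExtensionality.
Set Implicit Arguments. Unset Strict Implicit. Unset Printing Implicit Defensive.
Import Order.TTheory GRing.Theory Num.Theory.
Local Open Scope ring_scope.

(* The argument is the Hilbert-space one, carried out in coordinates.
   1. Write <u, v> = sum_A u_A v_A for the Euclidean product of coefficient
      vectors of R_{0,m}.  Left and right multiplication by a generator e_j is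
      skew-adjoint for it, so the sandwich u |-> e_i u e_j is self-adjoint;
      moreover [conj(e_A) X]_0 = X_A.
   2. Hence the inner product <P, Q>_k of the statement is the Fischer product
      sum_{|a| = k} a! <P_a, Q_a> (Lemma ipk_fischer), which is symmetric and
      positive definite on homogeneous polynomials.
   3. For the Fischer product, multiplication by x_j is adjoint to d_j, so
      Q |-> x Q x is adjoint to P |-> d P d (Lemma fischer_xPx_dPd).
   4. Gram-Schmidt along the finite family of monomials e_A x^a, |a| = k - 2,
      writes every P in P(k) as P = I + x Q x with I orthogonal to x P(k-2) x;
      by 3, <Q', d I d> = 0 for every Q', and testing Q' = e_A x^a gives
      d I d = 0.
   The theorem follows: orthogonality is 3, directness and the description of
   I(k) as an orthogonal complement are 3 together with positivity 2. *)

Section SymmetricDifference.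
Variable m : nat.
Implicit Types A B C : {set 'I_m}.

Lemma in_symdiff A B x : (x \in symdiff A B) = (x \in A) (+) (x \in B).
Proof. by rewrite /symdiff !inE; case: (x \in A); case: (x \in B). Qed.

Lemma symdiff_eq A B C : (symdiff A B == C) = (B == symdiff A C).
Proof.
apply/eqP/eqP => [<-|->]; apply/setP => x; rewrite !in_symdiff;
  by case: (x \in A); case: (x \in B); case: (x \in C).
Qed.

Lemma symdiffC A B : symdiff A B = symdiff B A.
Proof. by apply/setP => x; rewrite !in_symdiff addbC. Qed.

Lemma symdiffA A B C : symdiff A (symdiff B C) = symdiff (symdiff A B) C.
Proof. by apply/setP => x; rewrite !in_symdiff addbA. Qed.

Lemma symdiffK A B : symdiff A (symdiff A B) = B.
Proof. by apply/setP => x; rewrite !in_symdiff addbA addbb. Qed.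

Lemma symdiffKr A B : symdiff (symdiff B A) A = B.
Proof. by rewrite symdiffC [symdiff B A]symdiffC symdiffK. Qed.

Lemma symdiff0 A : symdiff A set0 = A.
Proof. by apply/setP => x; rewrite in_symdiff inE addbF. Qed.

End SymmetricDifference.

Section CliffordAlgebra.
Variables (R : realFieldType) (m : nat).
Implicit Types (u v : Cl R m) (A B C D : {set 'I_m}).

Lemma clmul_addl u v (w : Cl R m) : clmul (u + v) w = clmul u w + clmul v w.
Proof.
apply/ffunP => C; rewrite !ffunE -big_split; apply: eq_bigr => A _.
by rewrite -big_split; apply: eq_bigr => B _; rewrite ffunE mulrDr mulrDl.
Qed.

Lemma clmul_addr u v (w : Cl R m) : clmul w (u + v) = clmul w u + clmul w v.
Proof.
apply/ffunP => C; rewrite !ffunE -big_split; apply: eq_bigr => A _.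
by rewrite -big_split; apply: eq_bigr => B _; rewrite ffunE mulrDr.
Qed.

Lemma clmul_scalel r u v : clmul (clscale r u) v = clscale r (clmul u v).
Proof.
apply/ffunP => C; rewrite !ffunE mulr_sumr; apply: eq_bigr => A _.
by rewrite mulr_sumr; apply: eq_bigr => B _; rewrite ffunE mulrCA !mulrA.
Qed.

Lemma clmul_scaler r u v : clmul u (clscale r v) = clscale r (clmul u v).
Proof.
apply/ffunP => C; rewrite !ffunE mulr_sumr; apply: eq_bigr => A _.
by rewrite mulr_sumr; apply: eq_bigr => B _; rewrite ffunE mulrCA [r * _]mulrC.
Qed.

Lemma clmul0l u : clmul 0 u = 0.
Proof.
apply/ffunP => C; rewrite !ffunE big1 // => A _.
by rewrite big1 // => B _; rewrite ffunE mulr0 mul0r.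
Qed.

Lemma clmul0r u : clmul u 0 = 0.
Proof.
apply/ffunP => C; rewrite !ffunE big1 // => A _.
by rewrite big1 // => B _; rewrite ffunE mulr0.
Qed.

Lemma clscale0 r : clscale r (0 : Cl R m) = 0.
Proof. by apply/ffunP => A; rewrite !ffunE mulr0. Qed.

Lemma clscale1 u : clscale 1 u = u.
Proof. by apply/ffunP => A; rewrite ffunE mul1r. Qed.

Lemma clscaleM r t u : clscale r (clscale t u) = clscale (r * t) u.
Proof. by apply/ffunP => A; rewrite !ffunE mulrA. Qed.

Lemma clscale_sum r (I : finType) (F : I -> Cl R m) :
  clscale r (\sum_i F i) = \sum_i clscale r (F i).
Proof.
apply/ffunP => A; rewrite ffunE !sum_ffunE mulr_sumr.
by apply: eq_bigr => i _; rewrite ffunE.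
Qed.

Lemma clmul_egenl i u :
  clmul (egen R i) u = [ffun C => sgnCl R [set i] (symdiff [set i] C) * u (symdiff [set i] C)].
Proof.
apply/ffunP => C; rewrite !ffunE (bigD1 [set i]) //= [X in _ + X]big1 ?addr0.
  rewrite (eq_bigl (fun B => B == symdiff [set i] C)) => [|B]; last by rewrite symdiff_eq.
  by rewrite big_pred1_eq !ffunE eqxx mulr1.
by move=> A /negbTE hA; apply: big1 => B _; rewrite !ffunE hA mulr0 mul0r.
Qed.

Lemma clmul_egenr j u :
  clmul u (egen R j) = [ffun C => sgnCl R (symdiff C [set j]) [set j] * u (symdiff C [set j])].
Proof.
apply/ffunP => C; rewrite !ffunE.
rewrite (eq_bigr (fun A => sgnCl R A (symdiff A C) * u A * (symdiff A C == [set j])%:R));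
  last first.
  move=> A _; rewrite (eq_bigl (fun B => B == symdiff A C)) => [|B]; last by rewrite symdiff_eq.
  by rewrite big_pred1_eq !ffunE.
rewrite (bigD1 (symdiff C [set j])) //= [X in _ + X]big1 ?addr0.
  by rewrite [symdiff (symdiff _ _) C]symdiffC symdiffK eqxx mulr1.
move=> A hA; rewrite [_ == _](_ : _ = false) ?mulr0 //; apply/negbTE.
by apply: contra hA; rewrite symdiffC symdiff_eq => /eqP ->; rewrite symdiffC.
Qed.

Lemma card_set1I i D : #|[set i] :&: D| = (i \in D).
Proof.
case hD: (i \in D); last first.
  by rewrite (_ : _ :&: _ = set0) ?cards0 //; apply/setP => y; rewrite !inE;
    case: eqP => // ->; rewrite hD.
rewrite (_ : _ :&: _ = [set i]) ?cards1 //.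
by apply/setP => y; rewrite !inE; case: eqP => // ->.
Qed.

Lemma sgnCl_genl i D :
  sgnCl R [set i] D = (-1) ^+ (odd #|[set y in D | (y < i)%N]| (+) (i \in D)).
Proof.
rewrite /sgnCl -signr_odd oddD card_set1I; congr ((-1) ^+ (odd _ (+) _)); last exact: oddb.
rewrite -!sum1dep_card -(pair_big_dep (fun x => x \in [set i])
  (fun x y => (y \in D) && (y < x)%N) (fun _ _ => 1%N)) /=.
by rewrite (eq_bigl (fun x => x == i)) ?big_pred1_eq // => x; rewrite inE.
Qed.

Lemma sgnCl_genr j D :
  sgnCl R D [set j] = (-1) ^+ (odd #|[set x in D | (j < x)%N]| (+) (j \in D)).
Proof.
rewrite /sgnCl -signr_odd oddD setIC card_set1I; congr ((-1) ^+ (odd _ (+) _)); last exact: oddb.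
rewrite -!sum1dep_card -(pair_big_dep (fun x => x \in D)
  (fun x y => (y \in [set j]) && (y < x)%N) (fun _ _ => 1%N)) /=.
rewrite big_mkcondr /=; apply: eq_bigr => x _.
rewrite (eq_bigl (fun y => (y == j) && (y < x)%N)) => [|y]; last by rewrite inE.
by rewrite big_mkcondr big_pred1_eq.
Qed.

Lemma odd_card_toggle j D (P : pred 'I_m) :
  odd #|[set y in symdiff [set j] D | P y]| = odd #|[set y in D | P y]| (+) P j.
Proof.
rewrite (cardsD1 j [set y in symdiff [set j] D | P y]) (cardsD1 j [set y in D | P y]).
have -> : [set y in symdiff [set j] D | P y] :\ j = [set y in D | P y] :\ j.
  by apply/setP => y; rewrite !in_setD1 !in_set !in_set1; case: (y == j); case: (y \in D).
rewrite !oddD !oddb !in_set !in_set1 eqxx /=.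
by case: (j \in D); case: (P j); case: (odd _).
Qed.

Lemma sgnCl_genl_toggle i D :
  sgnCl R [set i] (symdiff [set i] D) = - sgnCl R [set i] D.
Proof.
rewrite !sgnCl_genl odd_card_toggle in_symdiff inE eqxx ltnn /=.
by case: (odd _); case: (i \in D); rewrite /= ?expr0 ?expr1 ?opprK.
Qed.

Lemma sgnCl_genr_toggle j D :
  sgnCl R (symdiff D [set j]) [set j] = - sgnCl R D [set j].
Proof.
rewrite !sgnCl_genr symdiffC odd_card_toggle in_symdiff inE eqxx ltnn /=.
by case: (odd _); case: (j \in D); rewrite /= ?expr0 ?expr1 ?opprK.
Qed.

(* Associativity of the product in the only instance needed: e_i (v e_j) = (e_i v) e_j. *)
Lemma sgnCl_egen_assoc i j C :
  sgnCl R [set i] (symdiff [set i] C) * sgnCl R (symdiff (symdiff [set i] C) [set j]) [set j]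
  = sgnCl R (symdiff C [set j]) [set j] * sgnCl R [set i] (symdiff [set i] (symdiff C [set j])).
Proof.
rewrite !sgnCl_genl !sgnCl_genr.
rewrite [symdiff (symdiff [set i] C) [set j]]symdiffC [symdiff C [set j]]symdiffC.
rewrite !odd_card_toggle !in_symdiff !inE eqxx ltnn /= [j == i]eq_sym -!signr_addb.
congr ((-1) ^+ _); rewrite !ltnn !eqxx.
move: (odd _) (odd _) (i \in C) (j \in C) (i == j) (j < i)%N => a b c d e f.
by case: a; case: b; case: c; case: d; case: e; case: f.
Qed.

Lemma clmul_egen_assoc i j v :
  clmul (egen R i) (clmul v (egen R j)) = clmul (clmul (egen R i) v) (egen R j).
Proof.
apply/ffunP => C; rewrite !clmul_egenl !clmul_egenr !ffunE.
by rewrite mulrA sgnCl_egen_assoc -symdiffA mulrA.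
Qed.

Definition dotCl u v : R := \sum_A u A * v A.

Lemma dotClC u v : dotCl u v = dotCl v u.
Proof. by apply: eq_bigr => A _; rewrite mulrC. Qed.

Lemma dotCl0l v : dotCl 0 v = 0.
Proof. by rewrite /dotCl big1 // => A _; rewrite ffunE mul0r. Qed.

Lemma dotCl_scaler r u v : dotCl u (clscale r v) = r * dotCl u v.
Proof. by rewrite /dotCl mulr_sumr; apply: eq_bigr => A _; rewrite ffunE mulrCA. Qed.

Lemma dotCl_combl s t u1 u2 v :
  dotCl (clscale s u1 + clscale t u2) v = s * dotCl u1 v + t * dotCl u2 v.
Proof.
rewrite /dotCl !mulr_sumr -big_split; apply: eq_bigr => A _.
by rewrite !ffunE mulrDl !mulrA.
Qed.

Lemma dotCl_suml (I : finType) (F : I -> Cl R m) v :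
  dotCl (\sum_i F i) v = \sum_i dotCl (F i) v.
Proof.
by rewrite /dotCl exchange_big; apply: eq_bigr => A _; rewrite sum_ffunE mulr_suml.
Qed.

Lemma dotCl_ge0 u : 0 <= dotCl u u.
Proof. by apply: sumr_ge0 => A _; rewrite -expr2 sqr_ge0. Qed.

Lemma dotCl_eq0 u : dotCl u u = 0 -> u = 0.
Proof.
move=> h; apply/ffunP => A; rewrite ffunE.
have hsq B : true -> 0 <= u B * u B by rewrite -expr2 sqr_ge0.
by move: (psumr_eq0P hsq h (i := A) isT) => /eqP; rewrite mulf_eq0 orbb => /eqP.
Qed.

Lemma dotCl_egenl i u v :
  dotCl (clmul (egen R i) u) v = - dotCl u (clmul (egen R i) v).
Proof.
rewrite /dotCl (reindex_inj (can_inj (@symdiffK m [set i]))) /= -sumrN.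
apply: eq_bigr => D _; rewrite !clmul_egenl !ffunE symdiffK sgnCl_genl_toggle.
by rewrite mulNr mulrN opprK mulrA [_ * sgnCl _ _ _]mulrC.
Qed.

Lemma dotCl_egenr j u v :
  dotCl (clmul u (egen R j)) v = - dotCl u (clmul v (egen R j)).
Proof.
have inj : injective (fun B : {set 'I_m} => symdiff B [set j]).
  by apply: (can_inj (g := fun B => symdiff B [set j])) => B; rewrite symdiffKr.
rewrite /dotCl (reindex_inj inj) /= -sumrN.
apply: eq_bigr => D _; rewrite !clmul_egenr !ffunE symdiffKr sgnCl_genr_toggle.
by rewrite mulNr mulrN opprK mulrA [_ * sgnCl _ _ _]mulrC.
Qed.

Lemma dotCl_sandwich i j u v :
  dotCl (clmul (clmul (egen R i) u) (egen R j)) v =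
  dotCl u (clmul (clmul (egen R i) v) (egen R j)).
Proof. by rewrite dotCl_egenr dotCl_egenl opprK clmul_egen_assoc. Qed.

(* e_A e_A = (-1)^(|A|(|A|+1)/2), i.e. conj(e_A) e_A = 1.  The sign of e_A e_A
   counts the inversions c of A x A plus |A|; they satisfy 2c + |A| = |A|^2. *)
Lemma card_pairs (T : finType) (P : T -> T -> bool) :
  #|[set p : T * T | P p.1 p.2]| = (\sum_x \sum_y (P x y : nat))%N.
Proof.
rewrite -sum1dep_card big_mkcond /= -(pair_bigA _ (fun x y => if P x y then 1%N else 0%N)) /=.
by apply: eq_bigr => x _; apply: eq_bigr => y _; case: (P x y).
Qed.

Lemma card_inversions A :
  (#|[set p : 'I_m * 'I_m | (p.1 \in A) && ((p.2 \in A) && (p.2 < p.1)%N)]| * 2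
   + #|A| = #|A| * #|A|)%N.
Proof.
rewrite -cardsX (_ : setX A A = [set p : 'I_m * 'I_m | (p.1 \in A) && (p.2 \in A)]);
  last by apply/setP => p; rewrite !inE.
rewrite (card_pairs (fun x y => (x \in A) && ((y \in A) && (y < x)%N)))
        (card_pairs (fun x y => (x \in A) && (y \in A))).
have diag : #|A| = (\sum_x \sum_y ((x \in A) && (y == x) : nat))%N.
  rewrite -sum1_card big_mkcond /=; apply: eq_bigr => x _.
  rewrite (bigD1 x) //= big1 ?addn0; first by rewrite eqxx andbT; case: (x \in A).
  by move=> y /negbTE ->; rewrite andbF.
rewrite muln2 -addnn {2}exchange_big diag -!big_split /=.
apply: eq_bigr => x _; rewrite -!big_split /=; apply: eq_bigr => y _.
case: (ltngtP x y) => h; last first.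
  by rewrite (_ : y = x) ?ltnn ?eqxx /= ?andbF ?andbT ?andbb //; apply: val_inj.
- rewrite (_ : (y == x) = false); last by apply/eqP => e; rewrite e ltnn in h.
  by case: (x \in A); case: (y \in A).
- rewrite (_ : (y == x) = false); last by apply/eqP => e; rewrite e ltnn in h.
  by case: (x \in A); case: (y \in A).
Qed.

Lemma sgnCl_conj_self A : sgnCl R A A * (-1) ^+ ((#|A| * #|A|.+1) %/ 2)%N = 1.
Proof.
rewrite /sgnCl setIid; set c := #|[set p : 'I_m * 'I_m | _]|.
have hc : (c * 2 + #|A| = #|A| * #|A|)%N by exact: card_inversions.
have -> : (#|A| * #|A|.+1 = (c + #|A|) * 2)%N by rewrite mulnS -hc mulnDl addnCA addnn !muln2.
by rewrite mulnK // -exprD addnn -signr_odd odd_double expr0.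
Qed.

Lemma scal0_clconj A X : scal0 (clmul (clconj (eA R A)) X) = X A.
Proof.
rewrite /scal0 ffunE (bigD1 A) //= [X in _ + X]big1 ?addr0.
  rewrite (eq_bigl (fun B => B == A)) => [|B]; last by rewrite symdiff_eq symdiff0.
  by rewrite big_pred1_eq !ffunE eqxx /= mulr1n mulr1 sgnCl_conj_self mul1r.
move=> A' hA'; apply: big1 => B _.
by rewrite !ffunE (negbTE hA') /= mulr0n !mulr0 mul0r.
Qed.

End CliffordAlgebra.

Section Monomials.
Variable m : nat.
Implicit Types a b : cmono m.

Definition incm (j : 'I_m) b : cmono m := [ffun i => (b i + (i == j))%N].
Definition decm (j : 'I_m) b : cmono m := [ffun i => (b i - (i == j))%N].
Definition mfact b : nat := (\prod_(i < m) (b i)`!)%N.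

Lemma leq_mdeg a i : (a i <= mdeg a)%N.
Proof. by rewrite /mdeg (bigD1 i) //= leq_addr. Qed.

Lemma mdeg_incm j b : mdeg (incm j b) = (mdeg b).+1.
Proof.
rewrite /mdeg (eq_bigr (fun i => b i + (i == j))%N) => [|i _]; last by rewrite ffunE.
rewrite big_split /= [X in (_ + X)%N](_ : _ = 1%N) ?addn1 //.
by rewrite (bigD1 j) //= eqxx big1 // => i /negbTE ->.
Qed.

Lemma incmK j : cancel (incm j) (decm j).
Proof. by move=> b; apply/ffunP => i; rewrite !ffunE addnK. Qed.

Lemma decmK j a : (0 < a j)%N -> incm j (decm j a) = a.
Proof.
move=> h; apply/ffunP => i; rewrite !ffunE.
by case: eqP => [->|_]; [rewrite subnK | rewrite !subn0 addn0].
Qed.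

Lemma mdeg_decm j a : (0 < a j)%N -> mdeg a = (mdeg (decm j a)).+1.
Proof. by move=> h; rewrite -(mdeg_incm j) decmK. Qed.

Lemma incmC i j b : incm i (incm j b) = incm j (incm i b).
Proof. by apply/ffunP => x; rewrite !ffunE addnAC. Qed.

Lemma mfact_incm j b : mfact (incm j b) = ((b j).+1 * mfact b)%N.
Proof.
rewrite /mfact (bigD1 j) //= [in RHS](bigD1 j) //= !ffunE eqxx addn1 factS mulnA.
by congr (_ * _)%N; apply: eq_bigr => i /negbTE h; rewrite ffunE h addn0.
Qed.

Lemma mfact_gt0 b : (0 < mfact b)%N.
Proof. by apply: prodn_gt0 => i; apply: fact_gt0. Qed.

(* Exponent vectors of degree <= N are enumerated by 'I_m -> 'I_N.+1. *)
Lemma mono_of_inj N : injective (@mono_of m N).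
Proof.
move=> f g e; apply/ffunP => i; apply: val_inj.
by have := congr1 (fun h : cmono m => h i) e; rewrite !ffunE.
Qed.

Lemma mono_of_surj N a : (mdeg a <= N)%N -> exists f : {ffun 'I_m -> 'I_N.+1}, mono_of f = a.
Proof.
move=> h; exists [ffun i => inord (a i)]; apply/ffunP => i.
by rewrite !ffunE inordK // ltnS (leq_trans (leq_mdeg a i)).
Qed.

End Monomials.

Section Polynomials.
Variables (R : realFieldType) (m : nat).
Implicit Types (P Q W : cpoly R m) (a b : cmono m).

Definition pcomb (s : R) P (t : R) Q : cpoly R m :=
  fun a => clscale s (P a) + clscale t (Q a).

Lemma hom_pcomb n s t P Q : isHom n P -> isHom n Q -> isHom n (pcomb s P t Q).
Proof. by move=> hP hQ a ha; rewrite /pcomb hP // hQ // !clscale0 addr0. Qed.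

Lemma hom_mulx n j Q : isHom n Q -> isHom n.+1 (mulx j Q).
Proof.
move=> hQ a ha; rewrite /mulx; case: ifP => // h; apply: hQ => e.
by apply: ha; rewrite (mdeg_decm h) e.
Qed.

Lemma hom_dx n j P : isHom n.+1 P -> isHom n (dx j P).
Proof.
move=> hP a ha; rewrite /dx (_ : P _ = 0) ?clscale0 //; apply: hP.
by change (mdeg (incm j a) <> n.+1); rewrite mdeg_incm => -[].
Qed.

Lemma hom_xPx n Q : isHom n Q -> isHom n.+2 (xPx Q).
Proof.
move=> hQ a ha; rewrite /xPx big1 // => i _; rewrite big1 // => j _.
by rewrite (hom_mulx i (hom_mulx j hQ)) // clmul0r clmul0l.
Qed.

Lemma hom_dPd n P : isHom n.+2 P -> isHom n (dPd P).
Proof.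
move=> hP a ha; rewrite /dPd big1 // => i _; rewrite big1 // => j _.
by rewrite (hom_dx i (hom_dx j hP)) // clmul0r clmul0l.
Qed.

Lemma mulx_pcomb j s t P Q : mulx j (pcomb s P t Q) = pcomb s (mulx j P) t (mulx j Q).
Proof.
apply: functional_extensionality => a; rewrite /mulx /pcomb.
by case: ifP => _ //; rewrite !clscale0 addr0.
Qed.

Lemma xPx_pcomb s t P Q : xPx (pcomb s P t Q) = pcomb s (xPx P) t (xPx Q).
Proof.
apply: functional_extensionality => a; rewrite /xPx /pcomb !clscale_sum -big_split.
apply: eq_bigr => i _; rewrite !clscale_sum -big_split; apply: eq_bigr => j _.
by rewrite !mulx_pcomb /pcomb clmul_addr clmul_addl !clmul_scaler !clmul_scalel.
Qed.

Lemma xPx0 : xPx (pzero R m) = pzero R m.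
Proof.
have mulx0 j : mulx j (pzero R m) = pzero R m.
  by apply: functional_extensionality => b; rewrite /mulx; case: ifP.
apply: functional_extensionality => a; rewrite /xPx /pzero /=.
by apply: big1 => i _; apply: big1 => j _; rewrite !mulx0 /pzero clmul0r clmul0l.
Qed.

Lemma dx_sandwich i j l P :
  dx j (fun a => clmul (clmul (egen R i) (P a)) (egen R l)) =
  fun a => clmul (clmul (egen R i) (dx j P a)) (egen R l).
Proof.
by apply: functional_extensionality => a; rewrite /dx clmul_scaler clmul_scalel.
Qed.

Lemma dxC i j P : dx i (dx j P) = dx j (dx i P).
Proof.
apply: functional_extensionality => a; rewrite /dx.
change (clscale (a i).+1%:R (clscale ((incm i a) j).+1%:R (P (incm j (incm i a)))) =
        clscale (a j).+1%:R (clscale ((incm j a) i).+1%:R (P (incm i (incm j a))))).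
rewrite !clscaleM incmC; congr clscale.
case: (eqVneq i j) => [->//|h].
by rewrite !ffunE (negbTE h) eq_sym (negbTE h) !addn0 mulrC.
Qed.

(* The Fischer product of the degree-n parts of P and Q,
     sum_{|a| = n} a! <P_a, Q_a>,
   where the exponent vectors a are enumerated as bounded functions
   'I_m -> 'I_N.+1 (any N >= n does). *)
Definition fischer N n P Q : R :=
  \sum_(f : {ffun 'I_m -> 'I_N.+1} | mdeg (mono_of f) == n)
     (mfact (mono_of f))%:R * dotCl (P (mono_of f)) (Q (mono_of f)).

Lemma fischerC N n P Q : fischer N n P Q = fischer N n Q P.
Proof. by apply: eq_bigr => f _; rewrite dotClC. Qed.

Lemma fischer0l N n W : fischer N n (pzero R m) W = 0.
Proof. by rewrite /fischer big1 // => f _; rewrite /pzero dotCl0l mulr0. Qed.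

Lemma fischer_pcombl N n s t P Q W :
  fischer N n (pcomb s P t Q) W = s * fischer N n P W + t * fischer N n Q W.
Proof.
rewrite /fischer !mulr_sumr -big_split; apply: eq_bigr => f _.
by rewrite /pcomb dotCl_combl mulrDr !mulrA [_ * s]mulrC [_ * t]mulrC.
Qed.

Lemma fischer_pcombr N n s t P Q W :
  fischer N n W (pcomb s P t Q) = s * fischer N n W P + t * fischer N n W Q.
Proof. by rewrite fischerC fischer_pcombl !(fischerC _ _ W). Qed.

Lemma fischer_sumr2 N n (F : 'I_m -> 'I_m -> cpoly R m) Q :
  fischer N n Q (fun a => \sum_i \sum_j F i j a) = \sum_i \sum_j fischer N n Q (F i j).
Proof.
rewrite /fischer (eq_bigr (fun f => \sum_i \sum_j
  (mfact (mono_of f))%:R * dotCl (Q (mono_of f)) (F i j (mono_of f)))); last first.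
  move=> f _; rewrite dotClC dotCl_suml mulr_sumr; apply: eq_bigr => i _.
  by rewrite dotCl_suml mulr_sumr; apply: eq_bigr => j _; rewrite dotClC.
by rewrite exchange_big; apply: eq_bigr => i _; rewrite exchange_big.
Qed.

Lemma fischer_eq0 N n P : isHom n P -> (n <= N)%N -> fischer N n P P = 0 -> P = pzero R m.
Proof.
move=> hP hn h; apply: functional_extensionality => a; rewrite /pzero.
case: (eqVneq (mdeg a) n) => ha; last by apply: hP; apply/eqP.
have [f hf] := @mono_of_surj m N a (ltac:(by rewrite ha)); rewrite -hf in ha *.
have hge0 (g : {ffun 'I_m -> 'I_N.+1}) : mdeg (mono_of g) == n ->
    0 <= (mfact (mono_of g))%:R * dotCl (P (mono_of g)) (P (mono_of g)) :> R.
  by move=> _; rewrite mulr_ge0 ?ler0n ?dotCl_ge0.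
move: (psumr_eq0P hge0 h (i := f)) => /(_ (ltac:(by rewrite ha))) /eqP.
by rewrite mulf_eq0 pnatr_eq0 (negbTE (lt0n_neq0 (mfact_gt0 _))) /= => /eqP /dotCl_eq0.
Qed.

Definition incF N (j : 'I_m) (g : {ffun 'I_m -> 'I_N.+1}) : {ffun 'I_m -> 'I_N.+1} :=
  [ffun i => inord (g i + (i == j))].
Definition decF N (j : 'I_m) (g : {ffun 'I_m -> 'I_N.+1}) : {ffun 'I_m -> 'I_N.+1} :=
  [ffun i => inord (g i - (i == j))].

Lemma mono_of_incF N j (g : {ffun 'I_m -> 'I_N.+1}) :
  (g j < N)%N -> mono_of (incF j g) = incm j (mono_of g).
Proof.
move=> h; apply/ffunP => i; rewrite !ffunE inordK //.
by case: eqP => [->|_]; rewrite ?addn1 ?addn0.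
Qed.

Lemma mono_of_decF N j (g : {ffun 'I_m -> 'I_N.+1}) :
  mono_of (decF j g) = decm j (mono_of g).
Proof.
apply/ffunP => i; rewrite !ffunE inordK //.
by rewrite ltnS (leq_trans (leq_subr _ _)) // -ltnS.
Qed.

Lemma incF_decF N j (f : {ffun 'I_m -> 'I_N.+1}) :
  (0 < f j)%N -> incF j (decF j f) = f.
Proof.
move=> hf; apply: mono_of_inj.
have hd : (decF j f j < N)%N.
  by move: (mono_of_decF j f) => /ffunP /(_ j); rewrite !ffunE eqxx subn1 => ->;
    rewrite -ltnS prednK.
by rewrite mono_of_incF // mono_of_decF decmK // ffunE.
Qed.

Lemma sum_shift N n (j : 'I_m) (F : cmono m -> R) : (n < N)%N ->
  \sum_(f : {ffun 'I_m -> 'I_N.+1} | mdeg (mono_of f) == n.+1)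
     (if (0 < mono_of f j)%N then F (mono_of f) else 0)
  = \sum_(g : {ffun 'I_m -> 'I_N.+1} | mdeg (mono_of g) == n) F (incm j (mono_of g)).
Proof.
move=> hn; rewrite -big_mkcondr (reindex_onto (incF j) (decF j)) /=; last first.
  by move=> f /andP [_]; rewrite ffunE; apply: incF_decF.
have bound (g : {ffun 'I_m -> 'I_N.+1}) : mdeg (mono_of g) == n -> (g j < N)%N.
  move=> /eqP hg; apply: leq_ltn_trans hn; rewrite -hg.
  by have := leq_mdeg (mono_of g) j; rewrite ffunE.
have dom (g : {ffun 'I_m -> 'I_N.+1}) : ((mdeg (mono_of (incF j g)) == n.+1) && (0 < mono_of (incF j g) j)%N)
             && (decF j (incF j g) == g) = (mdeg (mono_of g) == n).
  apply/idP/idP => [/andP [/andP [hdeg hpos] /eqP hK]|hg].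
    by rewrite -hK mono_of_decF; rewrite (mdeg_decm hpos) eqSS in hdeg.
  have gjN := bound g hg.
  have hK : decF j (incF j g) = g.
    by apply: mono_of_inj; rewrite mono_of_decF mono_of_incF ?incmK.
  by rewrite mono_of_incF // mdeg_incm eqSS hg ffunE eqxx addn1 hK eqxx.
by apply: eq_big => g; rewrite dom // => /bound hg; rewrite mono_of_incF.
Qed.

Lemma fischer_mulx_dx N n j Q W : (n < N)%N ->
  fischer N n.+1 (mulx j Q) W = fischer N n Q (dx j W).
Proof.
move=> hn; rewrite /fischer.
rewrite (eq_bigr (fun f => if (0 < mono_of f j)%N then
     (mfact (mono_of f))%:R * dotCl (Q (decm j (mono_of f))) (W (mono_of f)) else 0)); last first.
  by move=> f _; rewrite /mulx; case: ifP => _ //; rewrite dotCl0l mulr0.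
rewrite (sum_shift j (fun a => (mfact a)%:R * dotCl (Q (decm j a)) (W a))) //.
apply: eq_bigr => g _; rewrite incmK mfact_incm natrM.
change (dx j W (mono_of g)) with (clscale ((mono_of g j).+1)%:R (W (incm j (mono_of g)))).
by rewrite dotCl_scaler mulrCA mulrA.
Qed.

Lemma fischer_xPx_dPd N n Q P : (n.+2 <= N)%N ->
  fischer N n.+2 (xPx Q) P = fischer N n Q (dPd P).
Proof.
move=> hN; rewrite fischerC /xPx fischer_sumr2.
under eq_bigr => i _ do under eq_bigr => j _ do rewrite fischerC.
rewrite /dPd fischer_sumr2; apply: eq_bigr => i _; apply: eq_bigr => j _.
rewrite (_ : fischer _ _ _ _ = fischer N n.+2 (mulx i (mulx j Q))
               (fun a => clmul (clmul (egen R i) (P a)) (egen R j))); last first.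
  by apply: eq_bigr => f _; rewrite dotCl_sandwich.
by rewrite fischer_mulx_dx // fischer_mulx_dx ?(ltn_trans _ hN) // !dx_sandwich dxC.
Qed.

(* The inner product of the statement is the Fischer product: d^b applied to Q
   and evaluated at 0 gives b! Q_b, and [conj(e_A) X]_0 = X_A. *)
Lemma iter_dx j n P a :
  iter n (dx j) P a =
  clscale ((a j + n) ^_ n)%:R (P [ffun i => (a i + (if i == j then n else 0))%N]).
Proof.
elim: n P => [|n IH] P.
  rewrite ffactn0 clscale1; congr P; apply/ffunP => i.
  by rewrite ffunE; case: (i == j); rewrite addn0.
rewrite iterSr IH /dx clscaleM !ffunE eqxx; congr clscale.
  by rewrite -natrM addnS ffactSS mulnC.
congr P; apply/ffunP => i; rewrite !ffunE.
by case: (eqVneq i j) => [->|h]; rewrite ?eqxx ?(negbTE h) /= ?addn0 // addn1 addnS.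
Qed.

Lemma foldr_iter_dx (b : cmono m) (s : seq 'I_m) Q : uniq s -> forall a,
  foldr (fun j acc => iter (b j) (dx j) acc) Q s a =
  clscale (\prod_(j <- s) ((a j + b j) ^_ (b j)))%N%:R
          (Q [ffun i => (a i + (if i \in s then b i else 0))%N]).
Proof.
elim: s => [|j s IH] /=.
  by move=> _ a; rewrite big_nil clscale1; congr Q; apply/ffunP => i; rewrite ffunE addn0.
move=> /andP [js us] a; rewrite iter_dx IH // clscaleM big_cons natrM.
congr clscale.
  congr (_ * _%:R); rewrite big_seq [in RHS]big_seq; apply: eq_bigr => i hi.
  by rewrite ffunE (_ : (i == j) = false) ?addn0 //; apply/negbTE; apply: contraNneq js => <-.
congr Q; apply/ffunP => i; rewrite !ffunE in_cons.
by case: (eqVneq i j) => [->|h] /=; rewrite ?(negbTE js) addn0.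
Qed.

Lemma dmono_at0 (b : cmono m) Q : dmono b Q (mono0 m) = clscale (mfact b)%:R (Q b).
Proof.
rewrite /dmono foldr_iter_dx ?enum_uniq //; congr clscale.
  by congr (_%:R); rewrite /mfact big_enum; apply: eq_bigr => i _; rewrite ffunE add0n ffactnn.
by congr Q; apply/ffunP => i; rewrite !ffunE mem_enum add0n.
Qed.

Lemma ipk_fischer k P Q : ipk k P Q = fischer k k P Q.
Proof.
rewrite /ipk /scal0 sum_ffunE; apply: eq_bigr => f _.
rewrite sum_ffunE /dotCl mulr_sumr; apply: eq_bigr => A _.
by rewrite -/(scal0 _) scal0_clconj dmono_at0 !ffunE mulrCA.
Qed.

Lemma fischer_xPx_infra n I Q : dPd I = pzero R m -> fischer n.+2 n.+2 (xPx Q) I = 0.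
Proof. by move=> hI; rewrite fischer_xPx_dPd // hI fischerC fischer0l. Qed.

(* Subtracting from r its component along w makes it orthogonal to w; when
   <w, w> = 0 the coefficient t = 0 / 0 = 0 and w = 0 by positivity. *)
Lemma fischer_orth_step N n w r : isHom n w -> (n <= N)%N ->
  fischer N n w (pcomb 1 r (- (fischer N n w r / fischer N n w w)) w) = 0.
Proof.
move=> hw hn; have [ww0|ww_neq0] := eqVneq (fischer N n w w) 0.
  by rewrite (fischer_eq0 hw hn ww0) fischer0l.
by rewrite fischer_pcombr mul1r mulNr divfK // subrr.
Qed.

Inductive span (T : eqType) (gen : T -> cpoly R m) (s : seq T) : cpoly R m -> Prop :=
| span0 : span gen s (pzero R m)
| span_gen p : p \in s -> span gen s (gen p)
| span_pcomb c d Q1 Q2 : span gen s Q1 -> span gen s Q2 -> span gen s (pcomb c Q1 d Q2).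

Section Span.
Variables (T : eqType) (gen : T -> cpoly R m).

Lemma span_hom n s Q : (forall p, p \in s -> isHom n (gen p)) -> span gen s Q -> isHom n Q.
Proof.
move=> h; elim=> [|p hp|c d Q1 Q2 _ h1 _ h2]; [by move=> a _ | exact: h | exact: hom_pcomb].
Qed.

Lemma span_cons p0 s Q : span gen s Q -> span gen (p0 :: s) Q.
Proof.
elim=> [|p hp|c d Q1 Q2 _ h1 _ h2]; [exact: span0 | | exact: span_pcomb].
by apply: span_gen; rewrite in_cons hp orbT.
Qed.

Lemma span_xPx_orth N n s Q W :
  (forall p, p \in s -> fischer N n (xPx (gen p)) W = 0) -> span gen s Q ->
  fischer N n (xPx Q) W = 0.
Proof.
move=> h; elim=> [|p hp|c d Q1 Q2 _ h1 _ h2]; first by rewrite xPx0 fischer0l.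
  exact: h.
by rewrite xPx_pcomb fischer_pcombl h1 h2 !mulr0 addr0.
Qed.

Lemma xPx_projection N n s : (n.+2 <= N)%N -> (forall p, p \in s -> isHom n (gen p)) ->
  forall P, exists Q, span gen s Q /\
    forall p, p \in s -> fischer N n.+2 (xPx (gen p)) (pcomb 1 P (-1) (xPx Q)) = 0.
Proof.
move=> hN; elim: s => [|p0 s IH] hs P; first by exists (pzero R m); split; [exact: span0|].
have hs' p : p \in s -> isHom n (gen p) by move=> hp; apply: hs; rewrite in_cons hp orbT.
have [Q1 [sQ1 orth1]] := IH hs' P.
have [Q2 [sQ2 orth2]] := IH hs' (xPx (gen p0)).
set V := pcomb 1 (gen p0) (-1) Q2.
have hV : isHom n V by apply: hom_pcomb; [apply: hs; rewrite mem_head | exact: span_hom sQ2].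
have orthV p : p \in s -> fischer N n.+2 (xPx (gen p)) (xPx V) = 0.
  by move=> hp; rewrite /V xPx_pcomb orth2.
have split_p0 : xPx (gen p0) = pcomb 1 (xPx V) 1 (xPx Q2).
  rewrite -xPx_pcomb; congr xPx; apply: functional_extensionality => a.
  by apply/ffunP => A; rewrite /V /pcomb !ffunE !mul1r mulN1r addrNK.
set r := pcomb 1 P (-1) (xPx Q1).
set t := fischer N n.+2 (xPx V) r / fischer N n.+2 (xPx V) (xPx V).
have residual : pcomb 1 P (-1) (xPx (pcomb 1 Q1 t V)) = pcomb 1 r (-t) (xPx V).
  rewrite xPx_pcomb; apply: functional_extensionality => a; apply/ffunP => A.
  by rewrite /r /pcomb !ffunE !mul1r !mulN1r opprD addrA mulNr.
have orth_s p : p \in s -> fischer N n.+2 (xPx (gen p)) (pcomb 1 r (-t) (xPx V)) = 0.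
  by move=> hp; rewrite fischer_pcombr orth1 // orthV // !mulr0 addr0.
exists (pcomb 1 Q1 t V); split.
  apply: span_pcomb; first exact: span_cons.
  by apply: span_pcomb; [apply: span_gen; rewrite mem_head | exact: span_cons].
move=> p; rewrite in_cons residual => /orP [/eqP ->|]; last exact: orth_s.
rewrite split_p0 fischer_pcombl (span_xPx_orth orth_s sQ2) mulr0 addr0 mul1r.
exact: fischer_orth_step (hom_xPx hV) hN.
Qed.

End Span.

Definition monomial b (A : {set 'I_m}) : cpoly R m := fun a => if a == b then eA R A else 0.

Lemma fischer_monomial N n b A D : mdeg b = n -> (n <= N)%N ->
  fischer N n (monomial b A) D = (mfact b)%:R * D b A.
Proof.
move=> hb hn; have [g hg] := @mono_of_surj m N b (ltac:(by rewrite hb)).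
rewrite /fischer (bigD1 g) /=; last by rewrite hg hb.
rewrite big1 ?addr0 => [|f /andP [_ hfg]].
  rewrite hg /monomial eqxx /dotCl (bigD1 A) //= big1 ?addr0; first by rewrite ffunE eqxx mul1r.
  by move=> B /negbTE h; rewrite ffunE h mul0r.
rewrite /monomial (_ : (mono_of f == b) = false) ?dotCl0l ?mulr0 //.
by apply/negbTE; apply: contra hfg => /eqP; rewrite -hg => /mono_of_inj ->.
Qed.

Lemma orth_monomials_eq0 n D : isHom n D ->
  (forall b A, mdeg b = n -> fischer n n (monomial b A) D = 0) -> D = pzero R m.
Proof.
move=> hD h; apply: functional_extensionality => a; apply/ffunP => A; rewrite /pzero ffunE.
have [ha|ha] := eqVneq (mdeg a) n; last by rewrite hD ?ffunE //; apply/eqP.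
move/eqP: (h a A ha); rewrite fischer_monomial //.
by rewrite mulf_eq0 pnatr_eq0 (negbTE (lt0n_neq0 (mfact_gt0 a))) => /eqP.
Qed.

Lemma fischer_decomposition n P : isHom n.+2 P ->
  exists Q, isHom n Q /\ dPd (pcomb 1 P (-1) (xPx Q)) = pzero R m.
Proof.
move=> hP.
pose T := ({ffun 'I_m -> 'I_n.+1} * {set 'I_m})%type.
pose gen (p : T) := monomial (mono_of p.1) p.2.
pose s := [seq p <- enum {: T} | mdeg (mono_of p.1) == n].
have hs p : p \in s -> isHom n (gen p).
  by rewrite mem_filter => /andP [/eqP hp _] a ha; rewrite /gen /monomial; case: eqP => // e;
    rewrite e hp in ha.
have [Q [sQ orthQ]] := xPx_projection (leqnn n.+2) hs P.
have hQ : isHom n Q := span_hom hs sQ.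
exists Q; split => //; apply: orth_monomials_eq0.
  by apply: hom_dPd; apply: hom_pcomb; [exact: hP | exact: hom_xPx hQ].
move=> b A hb; have [f hf] := @mono_of_surj m n b (ltac:(by rewrite hb)).
have hfA : (f, A) \in s by rewrite mem_filter /= hf hb eqxx mem_enum.
rewrite (fischer_monomial _ _ hb (leqnn n)).
rewrite -(fischer_monomial (N := n.+2) _ _ hb (leqW (leqnSn n))) -fischer_xPx_dPd //.
by have := orthQ _ hfA; rewrite /gen /= hf.
Qed.

End Polynomials.

Unset Implicit Arguments.

Theorem mainTheorem13 (R : realFieldType) (m k : nat) : (2 <= k)%N ->
  [/\ (* x P(k-2) x is contained in P(k) *)
      (forall Q : cpoly R m, isHom (k - 2) Q -> isHom k (xPx Q)),
      (* P(k) = I(k) + x P(k-2) x *)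
      (forall P : cpoly R m, isHom k P ->
         exists I Q : cpoly R m, [/\ infra k I, isHom (k - 2) Q & P = padd I (xPx Q)]),
      (* the sum is direct *)
      (forall I Q : cpoly R m, infra k I -> isHom (k - 2) Q -> I = xPx Q -> I = pzero R m),
      (* orthogonality *)
      (forall I Q : cpoly R m, infra k I -> isHom (k - 2) Q ->
         ipk k I (xPx Q) = 0 /\ ipk k (xPx Q) I = 0)
    & (* I(k) is the orthogonal complement of x P(k-2) x in P(k) *)
      (forall P : cpoly R m, isHom k P ->
         (infra k P <-> forall Q : cpoly R m, isHom (k - 2) Q -> ipk k (xPx Q) P = 0))].
Proof.
move=> hk; have [n ->] : exists n, k = n.+2 by exists (k - 2)%N; rewrite -addn2 subnK.
rewrite -addn2 addnK addn2.
have orth I Q : infra n.+2 I -> fischer n.+2 n.+2 (xPx Q) I = 0.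
  by case=> _ hI; apply: fischer_xPx_infra.
split.
- by move=> Q; apply: hom_xPx.
- move=> P hP; have [Q [hQ hI]] := fischer_decomposition hP.
  exists (pcomb 1 P (-1) (xPx Q)), Q; split=> //.
    by split=> //; apply: hom_pcomb => //; apply: hom_xPx.
  apply: functional_extensionality => a; apply/ffunP => A.
  by rewrite /padd /pcomb !ffunE !mul1r mulN1r subrK.
- move=> I Q hI _ eIQ; apply: (fischer_eq0 (proj1 hI) (leqnn _)).
  by rewrite {1}eIQ orth.
- by move=> I Q hI _; rewrite !ipk_fischer fischerC orth.
move=> P hP; split=> [hI Q _|horth]; first by rewrite ipk_fischer orth.
split=> //; have hD := hom_dPd hP.
apply: (fischer_eq0 hD (leqW (leqnSn n))).
by rewrite -fischer_xPx_dPd // -ipk_fischer horth.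
Qed.
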